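(* Let $n\ge1$, $\mathbf{k}=(k_1,\dots,k_n)$ positive integers, $D\in\mathcal{D}_{\mathbf{k}}$ and $T=T(D)$. Then the Ranking Algorithm assigns every index of $T$ a rank; that is, for each $i=2,\dots,n$, when column $i$ is processed, the index $t_i-1$ (where $t_i$ is the top index of column $i$) has already been assigned a rank.
   Context: $|\mathbf{k}|=k_1+\cdots+k_n$, $N=n+|\mathbf{k}|$. $\mathcal{D}_{\mathbf{k}}$: sequences $(a_1,\dots,a_N)$ whose positive entries are $k_1,\dots,k_n$ in order, other entries $-1$, all partial sums $a_1+\cdots+a_{i-1}\ge0$. SW-word: $S^{k_j}$ for up step $k_j$, $W$ for $-1$. Filling Algorithm producing $T(D)$: $n$ columns, column $i$ with $k_i+1$ cells in rows $1,\dots,k_i+1$; place $1$ at top of column 1; having placed $1,\dots,i-1$, the lowest filled entry of column $j$ is active if not in row $k_j+1$; if the $i$-th letter is $W$ place $i$ below the smallest active entry, otherwise at the top of the leftmost empty column; continue until $1,\dots,N$ are placed. Entries of $T$ are called indices. Ranking Algorithm: assign ranks $0,1,\dots,k_1$ to the column-1 indices from top to bottom; for $i$ from $2$ to $n$, if the top index of column $i$ is $A+1$ and index $A$ has rank $a$, assign the indices of column $i$ ranks $a,a+1,\dots,a+k_i$ from top to bottom. *)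

From mathcomp Require Import all_boot all_order all_algebra.
Set Implicit Arguments. Unset Strict Implicit. Unset Printing Implicit Defensive.
Import GRing.Theory Num.Theory.
Local Open Scope ring_scope.

(* Columns are 0-indexed: column j (0 <= j < n) of the paper is column j+1.
   k : seq nat is (k_1,...,k_n); a sequence D : seq int is (a_1,...,a_N). *)

Definition in_Dk (k : seq nat) (D : seq int) : Prop :=
  [/\ size D = (size k + sumn k)%N,
      [seq x <- D | 0 < x] = [seq Posz kj | kj <- k],
      all (fun x => (0 < x) || (x == -1)) D &
      forall i : nat, (i < size D)%N -> 0 <= \sum_(x <- take i D) x].

(* A tableau (during/after filling): a list of n columns, each column listing
   its filled entries from top (row 1) downwards. *)
Definition tableau := seq (seq nat).

Definition argmin (f : nat -> nat) (s : seq nat) : nat :=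
  foldl (fun b j => if (f j < f b)%N then j else b) (head 0%N s) s.

(* columns whose lowest filled entry is active: column nonempty and its
   lowest entry is not in row k_j + 1 (i.e. the column is not full) *)
Definition active_cols (k : seq nat) (T : tableau) : seq nat :=
  [seq j <- iota 0 (size k) |
     (nth [::] T j != [::]) && (size (nth [::] T j) < (nth 0%N k j).+1)%N].

(* one step of the Filling Algorithm: place index i with letter x
   (x > 0 means letter S^{x}, x = -1 means letter W) *)
Definition fill_step (k : seq nat) (T : tableau) (ix : nat * int) : tableau :=
  let: (i, x) := ix in
  if 0 < x then
    set_nth [::] T (find (fun c : seq nat => c == [::]) T) [:: i]
  else
    let act := active_cols k T in
    if act is [::] then T (* cannot happen for D in D_k *)
    else
      let j := argmin (fun j => last 0%N (nth [::] T j)) act in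
      set_nth [::] T j (rcons (nth [::] T j) i).

Definition filling (k : seq nat) (D : seq int) : tableau :=
  foldl (fill_step k) (set_nth [::] (nseq (size k) [::]) 0 [:: 1%N])
        (zip (iota 2 (size D).-1) (behead D)).

(* After the first p letters have been placed, the nonempty columns are exactly
   the first c ones, c being the number of S letters read so far; none of them
   overflows, together they hold p indices, and p itself lies in one of them.
   An S letter opens column c with top index p + 1, while p already sits in an
   earlier column: this is the ranking property.  A W letter always finds an
   active column: were the c open columns all full, they would hold
   p = (k_1 + 1) + ... + (k_c + 1) indices, making the partial sum a_1 + ... + a_p
   zero, and the W letter would drive it negative. *)

From mathcomp Require Import all_boot all_order all_algebra.
From mathcomp Require Import ring.
Import GRing.Theory Num.Theory.
Local Open Scope ring_scope.
Set Implicit Arguments. Unset Strict Implicit. Unset Printing Implicit Defensive.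

Section Tableau.

Variable k : seq nat.
Implicit Types (S : tableau) (c i j : nat).

Definition push_col S j i : tableau := set_nth [::] S j (rcons (nth [::] S j) i).

Lemma nth_push_col S j i j' :
  nth [::] (push_col S j i) j' = if j' == j then rcons (nth [::] S j) i else nth [::] S j'.
Proof. exact: nth_set_nth. Qed.

Lemma size_flatten_push_col S j i :
  (j < size S)%N -> size (flatten (push_col S j i)) = (size (flatten S)).+1.
Proof.
rewrite /push_col; elim: S j => [|s S IH] [|j] //= j_lt.
  by rewrite !size_cat size_rcons.
by rewrite size_cat IH // size_cat addnS.
Qed.

Definition well_shaped S c : Prop :=
  [/\ size S = size k,
      forall j, (nth [::] S j != [::]) = (j < c)%N &
      forall j, (j < c)%N -> (size (nth [::] S j) <= (nth 0%N k j).+1)%N].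

Definition ranked S c : Prop :=
  forall i, (0 < i < c)%N ->
    exists2 j, (j < i)%N & (head 0%N (nth [::] S i)).-1 \in nth [::] S j.

Lemma well_shaped_leq S c : well_shaped S c -> (c <= size k)%N.
Proof.
case=> size_S nonempty _; rewrite leqNgt -nonempty.
by rewrite nth_default ?size_S.
Qed.

Lemma well_shaped_nil S c j : well_shaped S c -> (c <= j)%N -> nth [::] S j = [::].
Proof. by case=> _ nonempty _; rewrite leqNgt -nonempty => /negbNE/eqP. Qed.

Lemma find_empty_col S c :
  well_shaped S c -> (c < size k)%N -> find (fun s => s == [::]) S = c.
Proof.
move=> shS c_lt; have [size_S nonempty _] := shS.
case: findP => [/hasP[]|i _ /(_ [::]) i_empty before_i].
  by exists (nth [::] S c); rewrite ?mem_nth ?size_S ?(well_shaped_nil shS).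
apply/eqP; rewrite eqn_leq [(c <= i)%N]leqNgt -nonempty i_empty andbT leqNgt.
by apply/negP=> /(before_i [::]); rewrite (well_shaped_nil shS).
Qed.

Lemma mem_active_cols S c j : well_shaped S c ->
  (j \in active_cols k S) = (j < c)%N && (size (nth [::] S j) < (nth 0%N k j).+1)%N.
Proof.
move=> shS; have [_ nonempty _] := shS.
rewrite mem_filter mem_iota add0n nonempty /=.
by case: ltnP => //= j_lt; rewrite (leq_trans j_lt (well_shaped_leq shS)) andbT.
Qed.

Lemma size_flatten_full S c : well_shaped S c -> active_cols k S = [::] ->
  size (flatten S) = (\sum_(0 <= j < c) (nth 0%N k j).+1)%N.
Proof.
move=> shS no_active; have [size_S _ fits] := shS.
rewrite size_flatten sumnE big_map (big_nth [::]) size_S.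
rewrite (big_cat_nat (leq0n c) (well_shaped_leq shS)) /=.
have -> : (\sum_(c <= j < size k) size (nth [::] S j) = 0)%N.
  rewrite big_nat_cond big1 // => j /andP[/andP[c_le_j _] _].
  by rewrite (well_shaped_nil shS c_le_j).
rewrite addn0; apply: eq_big_nat => j /andP[_ j_lt]; apply/eqP; rewrite eqn_leq fits //=.
by have := mem_active_cols j shS; rewrite no_active j_lt ltnNge => /esym/negbFE.
Qed.

Lemma argmin_in (f : nat -> nat) s : s != [::] -> argmin f s \in s.
Proof.
case: s => [|a s] // _; rewrite /argmin.
set pick := fun b j => _.
suff pick_in : forall t b, b \in a :: s -> {subset t <= a :: s} -> foldl pick b t \in a :: s.
  by apply: pick_in; rewrite ?mem_head.
elim=> [|y t IH] b //= b_in t_sub.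
apply: IH => [|z z_in]; last by apply: t_sub; rewrite in_cons z_in orbT.
by rewrite /pick; case: ifP => // _; apply: t_sub; rewrite mem_head.
Qed.

Lemma fill_step_up S c i x :
  well_shaped S c -> (c < size k)%N -> 0 < x -> fill_step k S (i, x) = push_col S c i.
Proof.
move=> shS c_lt x_gt0.
by rewrite /fill_step x_gt0 (find_empty_col shS c_lt) /push_col (well_shaped_nil shS).
Qed.

Lemma fill_step_down S i x : ~~ (0 < x) -> active_cols k S != [::] ->
  exists2 j, j \in active_cols k S & fill_step k S (i, x) = push_col S j i.
Proof.
rewrite /fill_step => /negbTE ->; case: (active_cols k S) => [|a act] //= _.
by exists (argmin (fun j => last 0%N (nth [::] S j)) (a :: act)); first exact: argmin_in.
Qed.

Lemma mem_push_col S j i j' y :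
  y \in nth [::] S j' -> y \in nth [::] (push_col S j i) j'.
Proof.
by rewrite nth_push_col; case: eqP => [->|] // y_in; rewrite mem_rcons in_cons y_in orbT.
Qed.

Lemma head_push_col S j i j' : nth [::] S j' != [::] ->
  head 0%N (nth [::] (push_col S j i) j') = head 0%N (nth [::] S j').
Proof. by rewrite nth_push_col; case: (j' =P j) => [->|] //; case: (nth [::] S j). Qed.

Lemma well_shaped_push_new S c i :
  well_shaped S c -> (c < size k)%N -> well_shaped (push_col S c i) c.+1.
Proof.
move=> shS c_lt; have [size_S nonempty fits] := shS.
split=> [|j|j]; rewrite ?nth_push_col ?(well_shaped_nil shS (leqnn c)) //=.
- by rewrite /push_col size_set_nth size_S; apply/maxn_idPr.
- by rewrite ltnS leq_eqVlt; case: (eqVneq j c) => //= _; rewrite nonempty.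
- by rewrite ltnS leq_eqVlt; case: (eqVneq j c) => //= _ /fits.
Qed.

Lemma well_shaped_push_active S c j i : well_shaped S c -> (j < c)%N ->
  (size (nth [::] S j) < (nth 0%N k j).+1)%N -> well_shaped (push_col S j i) c.
Proof.
move=> shS j_lt j_fits; have [size_S nonempty fits] := shS.
split=> [|j'|j']; rewrite ?nth_push_col.
- rewrite /push_col size_set_nth size_S; apply/maxn_idPr.
  exact: leq_trans j_lt (well_shaped_leq shS).
- by case: (eqVneq j' j) => [->|_]; rewrite ?nonempty // j_lt -size_eq0 size_rcons.
- by case: (eqVneq j' j) => [->|_ /fits //]; rewrite size_rcons.
Qed.

Lemma ranked_push_col S c j i :
  well_shaped S c -> ranked S c -> ranked (push_col S j i) c.
Proof.
move=> [_ nonempty _] rk i' i'_in; have [j' j'_lt i'_prev] := rk i' i'_in.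
exists j' => //; rewrite head_push_col ?nonempty; last by case/andP: i'_in.
exact: mem_push_col.
Qed.

Lemma ranked_push_new S c i : well_shaped S c -> ranked S c ->
    ((0 < c)%N -> exists2 j, (j < c)%N & i.-1 \in nth [::] S j) ->
  ranked (push_col S c i) c.+1.
Proof.
move=> shS rk prev i' /andP[i'_gt0]; rewrite ltnS leq_eqVlt => /orP[/eqP i'_eq | i'_lt].
  rewrite i'_eq nth_push_col eqxx (well_shaped_nil shS (leqnn c)) /= in i'_gt0 *.
  by have [j j_lt i_prev] := prev i'_gt0; exists j; last exact: mem_push_col.
by apply: (ranked_push_col c i shS rk); rewrite i'_gt0.
Qed.

End Tableau.

Lemma sum_pos_or_neg1 (s : seq int) : all (fun x => (0 < x) || (x == -1)) s ->
  \sum_(x <- s) x = \sum_(x <- s | 0 < x) (x + 1) - (size s)%:Z.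
Proof.
elim: s => [|a s IH] /=; first by rewrite !big_nil.
case/andP=> /orP[a_gt0 | /eqP ->] /IH{}IH; rewrite !big_cons IH ?a_gt0 //= -addn1 PoszD; ring.
Qed.

Section Words.

Variables (k : seq nat) (D : seq int).
Hypothesis Dk : in_Dk k D.

Definition up_steps p := count (fun x : int => 0 < x) (take p D).

Lemma filter_take_up_steps p : [seq x <- take p D | 0 < x] = map Posz (take (up_steps p) k).
Proof.
have [_ filter_D _ _] := Dk.
rewrite map_take -filter_D /up_steps -size_filter.
by rewrite -{3}(cat_take_drop p D) filter_cat take_size_cat.
Qed.

Lemma up_steps_leq p : (up_steps p <= size k)%N.
Proof.
have [_ filter_D _ _] := Dk.
by rewrite -(size_map Posz k) -filter_D size_filter -(cat_take_drop p D) count_cat leq_addr.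
Qed.

Lemma up_steps_size : up_steps (size D) = size k.
Proof.
have [_ filter_D _ _] := Dk.
by rewrite /up_steps take_size -size_filter filter_D size_map.
Qed.

Lemma up_steps_succ p : (p < size D)%N -> up_steps p.+1 = (up_steps p + (0 < nth 0 D p)%R)%N.
Proof. by move=> p_lt; rewrite /up_steps (take_nth 0 p_lt) -cats1 count_cat /= addn0. Qed.

Lemma sum_take_succ p : (p < size D)%N ->
  \sum_(x <- take p.+1 D) x = \sum_(x <- take p D) x + nth 0 D p.
Proof. by move=> p_lt; rewrite (take_nth 0 p_lt) -cats1 big_cat big_seq1. Qed.

Lemma letter_cases p : (p < size D)%N -> (0 < nth 0 D p) || (nth 0 D p == -1).
Proof. by have [_ _ /allP letters _] := Dk; move=> p_lt; apply/letters/mem_nth. Qed.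

Lemma sum_take p : (p <= size D)%N ->
  \sum_(x <- take p D) x = (\sum_(0 <= j < up_steps p) (nth 0%N k j).+1)%:Z - p%:Z.
Proof.
move=> p_le; have [_ _ letters _] := Dk.
rewrite sum_pos_or_neg1; last first.
  by move: letters; rewrite -{1}(cat_take_drop p D) all_cat => /andP[].
rewrite -(big_filter _ (fun x : int => 0 < x)) filter_take_up_steps big_map.
rewrite size_takel //; congr (_ - _).
rewrite (big_nth 0%N) size_takel ?up_steps_leq // -natz natr_sum.
by apply: eq_big_nat => j /andP[_ j_lt]; rewrite nth_take // natz -addn1 PoszD.
Qed.

Lemma prefix_sum_ge0 p : 0 <= \sum_(x <- take p D) x.
Proof.
have [size_D _ _ prefix_D] := Dk.
have [/prefix_D // | p_ge] := ltnP p (size D).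
rewrite take_oversize // -{1}[D]take_size sum_take // up_steps_size size_D.
rewrite -(big_nth 0%N xpredT succn) (eq_bigr (fun y => 1 + y)%N) //.
by rewrite big_split sum1_size -sumnE subrr.
Qed.

Lemma first_letter_gt0 : (0 < size k)%N -> all (fun kj => 0 < kj)%N k -> 0 < nth 0 D 0.
Proof.
move=> k_gt0 k_pos; have [size_D _ _ prefix_D] := Dk.
have D_gt1 : (1 < size D)%N.
  rewrite size_D; case: (k) k_gt0 k_pos => //= k0 k' _ /andP[k0_gt0 _].
  by rewrite addSn ltnS addnCA ltn_addr.
have := prefix_D 1%N D_gt1; rewrite (take_nth 0 (ltnW D_gt1)) take0 /= big_seq1.
by case/orP: (letter_cases (ltnW D_gt1)) => // /eqP ->.
Qed.

End Words.

Definition fill_prefix (k : seq nat) (D : seq int) (p : nat) : tableau :=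
  foldl (fill_step k) (nseq (size k) [::]) (zip (iota 1 p) (take p D)).

Lemma fill_prefix_succ k D p : (p < size D)%N ->
  fill_prefix k D p.+1 = fill_step k (fill_prefix k D p) (p.+1, nth 0 D p).
Proof.
move=> p_lt; rewrite /fill_prefix (take_nth 0 p_lt) -[X in iota _ X]addn1 iotaD cats1 add1n.
by rewrite zip_rcons ?foldl_rcons // size_iota size_takel // ltnW.
Qed.

Lemma filling_fill_prefix k D : (0 < size k)%N -> 0 < nth 0 D 0 ->
  filling k D = fill_prefix k D (size D).
Proof.
rewrite /filling /fill_prefix take_size.
case: D => [|d D'] //= k_gt0 d_gt0; congr foldl.
by rewrite /fill_step d_gt0 find_nseq eqxx.
Qed.

Section Invariant.

Variables (k : seq nat) (D : seq int).
Hypothesis Dk : in_Dk k D.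

Definition fill_inv p (S : tableau) : Prop :=
  [/\ well_shaped k S (up_steps D p), size (flatten S) = p,
      (0 < up_steps D p)%N -> exists2 j, (j < up_steps D p)%N & p \in nth [::] S j
    & ranked S (up_steps D p)].

Lemma fill_inv0 : fill_inv 0 (nseq (size k) [::]).
Proof.
rewrite /fill_inv /up_steps take0 /=; split=> //.
- by split=> [|j|j //]; rewrite ?size_nseq // nth_nseq if_same.
- by rewrite size_flatten /shape map_nseq sumn_nseq.
- by move=> i /andP[_]; rewrite ltn0.
Qed.

Lemma fill_inv_step p S : (p < size D)%N -> fill_inv p S ->
  fill_inv p.+1 (fill_step k S (p.+1, nth 0 D p)).
Proof.
move=> p_lt [shS size_S last_in rk]; have [size_S' _ _] := shS.
rewrite /fill_inv (up_steps_succ p_lt).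
case/orP: (letter_cases Dk p_lt) => [x_gt0 | /eqP x_eq].
- rewrite x_gt0 addn1.
  have c_lt : (up_steps D p < size k)%N.
    by have := up_steps_leq Dk p.+1; rewrite (up_steps_succ p_lt) x_gt0 addn1.
  rewrite (fill_step_up _ shS c_lt x_gt0); split.
  + exact: well_shaped_push_new.
  + by rewrite size_flatten_push_col ?size_S ?size_S'.
  + by move=> _; exists (up_steps D p); rewrite // nth_push_col eqxx mem_rcons mem_head.
  + exact: (@ranked_push_new k S _ p.+1 shS rk last_in).
- have x_le0 : (0 < nth 0 D p) = false by rewrite x_eq oppr_gt0 ltr10.
  rewrite x_le0 addn0.
  have active : active_cols k S != [::].
    apply/eqP=> no_active; have := prefix_sum_ge0 Dk p.+1.
    rewrite sum_take_succ // (sum_take Dk (ltnW p_lt)) x_eq -[in Posz p]size_S.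
    by rewrite (size_flatten_full shS no_active) subrr add0r oppr_ge0 ler10.
  have [j] := fill_step_down p.+1 (negbT x_le0) active.
  rewrite (mem_active_cols _ shS) => /andP[j_lt j_fits] ->; split.
  + exact: well_shaped_push_active shS j_lt j_fits.
  + by rewrite size_flatten_push_col ?size_S // size_S' (leq_trans j_lt (well_shaped_leq shS)).
  + by move=> _; exists j; rewrite // nth_push_col eqxx mem_rcons mem_head.
  + exact: ranked_push_col shS rk.
Qed.

Lemma fill_inv_prefix p : (p <= size D)%N -> fill_inv p (fill_prefix k D p).
Proof.
elim: p => [|p IH] p_le; first by rewrite /fill_prefix take0; exact: fill_inv0.
by rewrite fill_prefix_succ //; apply: fill_inv_step => //; apply/IH/ltnW.
Qed.

End Invariant.

Theorem mainTheorem5 (k : seq nat) (D : seq int) :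
  (0 < size k)%N ->
  all (fun kj => 0 < kj)%N k ->
  in_Dk k D ->
  forall i : nat, (0 < i < size k)%N ->
    nth [::] (filling k D) i != [::] /\
    exists2 j : nat, (j < i)%N &
      (head 0%N (nth [::] (filling k D) i)).-1 \in nth [::] (filling k D) j.
Proof.
move=> k_gt0 k_pos Dk i i_in.
have [[_ nonempty _] _ _ ranked_T] : fill_inv k D (size D) (filling k D).
  rewrite (filling_fill_prefix k_gt0 (first_letter_gt0 Dk k_gt0 k_pos)).
  exact: fill_inv_prefix.
rewrite (up_steps_size Dk) in nonempty ranked_T.
by split; [rewrite nonempty; case/andP: i_in | exact: ranked_T].
Qed.
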